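(* Let $p$ be an odd prime and $k\ge1$. Then $\mathcal{N}_{p^k}$ is a grounded tree with root $0$ and $p^{k-1}$ vertices, described as follows. (i) The vertices other than $0$ that have an edge to $0$ are exactly the residues $x=y\,p^\ell$ with $\lceil k/2\rceil\le \ell<k$, $1\le y\le p^{k-\ell}$ and $\gcd(y,p)=1$. (ii) For every nonzero $x\in\mathcal{N}_{p^k}$, write $x=\tilde x\,p^\ell$ with $1\le\ell<k$ and $\gcd(\tilde x,p)=1$, and let $\hat x\in\{1,\dots,p-1\}$ be $\tilde x\bmod p$. Then the in-tree of $x$ is isomorphic, as a rooted tree with root $x$, to $\mathcal{T}_p(\hat x,\ell)$. In particular, the subtree hanging off $0$ at the in-neighbour $y\,p^\ell$ from (i) is $\mathcal{T}_p(y \bmod p,\ \ell)$.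
   Context: $\mathcal{G}_{n}$ is the directed graph on $\{0,\dots,n-1\}$ with an edge $x\to x^2\bmod n$ for each $x$. $\mathcal{N}_{p^k}$ is the subgraph of $\mathcal{G}_{p^k}$ induced on the multiples of $p$ (the nilpotent residues). A grounded tree is a finite directed graph with all out-degrees one, a root carrying a loop, which is a tree after deleting the loop and in which every vertex has a directed path to the root. For a non-periodic vertex $x$, the in-tree of $x$ is the subgraph induced on all vertices $y$ with $f^j(y)=x$ for some $j\ge0$, where $f(y)=y^2\bmod p^k$. It is a rooted tree with root $x$ and edges directed toward the root. For $a\in\{1,\dots,p-1\}$ and $\ell\ge1$, the rooted tree $\mathcal{T}_p(a,\ell)$ (edges directed toward the root) is defined recursively on $\ell$: (1) if $\ell$ is odd, $\mathcal{T}_p(a,\ell)$ is a single vertex; (2) if $\ell$ is even and $a$ is not a square mod $p$, $\mathcal{T}_p(a,\ell)$ is a single vertex; (3) if $\ell$ is even and $a\equiv z_1^2\equiv z_2^2\pmod p$ with $z_1\neq z_2$ in $\{1,\dots,p-1\}$, then $\mathcal{T}_p(a,\ell)$ is a root with exactly $2p^{\ell/2}$ children. The subtrees rooted at $p^{\ell/2}$ of these children are copies of $\mathcal{T}_p(z_1,\ell/2)$, and the subtrees rooted at the other $p^{\ell/2}$ children are copies of $\mathcal{T}_p(z_2,\ell/2)$. *)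

From Stdlib Require List.
From mathcomp Require Import all_boot.

Set Implicit Arguments.
Unset Strict Implicit.
Unset Printing Implicit Defensive.

(* The squaring map on residues mod n: the edge x -> x^2 mod n of G_n. *)
Definition sqmod (n x : nat) : nat := (x ^ 2) %% n.

Definition Gverts (n : nat) : seq nat := iota 0 n.

(* Vertex list of N_{p^k}: the multiples of p in {0,...,p^k-1}. *)
Definition Nverts (p k : nat) : seq nat := [seq x <- iota 0 (p ^ k) | p %| x].

(* The induced subgraph on vs of the graph with edges x -> f x has edge set
   { (x, f x) | x in vs, f x in vs }.  After deleting the loop at the root r,
   the (undirected, multi-)edges are indexed by their tails e in vs, e != r,
   joining e and f e. *)

Definition ujoins (f : nat -> nat) (e u v : nat) : bool :=
  ((e == u) && (f e == v)) || ((e == v) && (f e == u)).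

Definition uadj (vs : seq nat) (f : nat -> nat) (r : nat) (u v : nat) : bool :=
  has (fun e => (e != r) && ujoins f e u v) vs.

Definition uconnected (vs : seq nat) (f : nat -> nat) (r : nat) : Prop :=
  forall u v, u \in vs -> v \in vs ->
    exists s : seq nat, path (uadj vs f r) u s /\ last u s = v.

(* A cycle of the multigraph: m >= 1 distinct vertices and m distinct edges,
   edge i joining vertex i and vertex (i+1 mod m). *)
Definition has_ucycle (vs : seq nat) (f : nat -> nat) (r : nat) : Prop :=
  exists (cv ce : seq nat),
    [/\ 0 < size cv, size ce = size cv, uniq cv /\ uniq ce,
        all (fun v => v \in vs) cv && all (fun e => (e \in vs) && (e != r)) ce &
        forall i, i < size cv ->
          ujoins f (nth 0 ce i) (nth 0 cv i) (nth 0 cv ((i.+1) %% size cv))].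

Definition is_tree_minus_loop (vs : seq nat) (f : nat -> nat) (r : nat) : Prop :=
  uconnected vs f r /\ ~ has_ucycle vs f r.

(* Grounded tree: all out-degrees one (in the induced subgraph), root r with a loop,
   a tree after deleting the loop, and every vertex has a directed path to r. *)
Definition grounded_tree (vs : seq nat) (f : nat -> nat) (r : nat) : Prop :=
  [/\ uniq vs,
      forall x, x \in vs -> f x \in vs,
      r \in vs /\ f r = r,
      is_tree_minus_loop vs f r &
      forall x, x \in vs -> exists j, iter j f x = r].

Inductive rtree : Type := RNode of seq rtree.

(* [realizes n f y t]: the in-tree of y in G_n (edges c -> f c, f = squaring mod n)
   is isomorphic, as a rooted tree with root y, to t.  The children of y are
   the in-neighbours c < n with f c = y, put in bijection (via the ordering cs)
   with the children of t, recursively. *)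
Fixpoint realizes (n : nat) (f : nat -> nat) (y : nat) (t : rtree) {struct t} : Prop :=
  let: RNode ts := t in
  exists cs : seq nat,
    [/\ uniq cs,
        (forall c, (c \in cs) = (c < n) && (f c == y)) &
        (fix r2 (cs : seq nat) (ts : seq rtree) {struct ts} : Prop :=
           match cs, ts with
           | [::], [::] => True
           | c :: cs', t' :: ts' => realizes n f c t' /\ r2 cs' ts'
           | _, _ => False
           end) cs ts].

Inductive is_Tp (p : nat) : nat -> nat -> rtree -> Prop :=
| Tp_odd a l : odd l -> is_Tp p a l (RNode [::])
| Tp_nonsq a l : ~~ odd l -> ~ (exists z, z ^ 2 = a %[mod p]) ->
    is_Tp p a l (RNode [::])
| Tp_sq a l z1 z2 (ts1 ts2 : seq rtree) :
    ~~ odd l -> 0 < l ->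
    0 < z1 < p -> 0 < z2 < p -> z1 != z2 ->
    z1 ^ 2 = a %[mod p] -> z2 ^ 2 = a %[mod p] ->
    size ts1 = p ^ (l./2) -> size ts2 = p ^ (l./2) ->
    (forall t, List.In t ts1 -> is_Tp p z1 (l./2) t) ->
    (forall t, List.In t ts2 -> is_Tp p z2 (l./2) t) ->
    is_Tp p a l (RNode (ts1 ++ ts2)).

From mathcomp Require Import all_boot zify.

Set Implicit Arguments.
Unset Strict Implicit.
Unset Printing Implicit Defensive.

(* Every multiple of [p] reaches [0] after [k] squarings, and a functional graph
   in which every vertex reaches a fixed root is a grounded tree: an edge always
   leads to a vertex closer to the root, so a deepest vertex of a cycle would be
   the tail of two distinct cycle edges.

   For the in-trees, a square root [c] of [x = xt * p ^ l] (with [p] not dividing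
   [xt]) has the form [y * p ^ (l / 2)] with [l] even and [y ^ 2 = xt] mod
   [p ^ (k - l)]. For odd [p], the two roots [z], [p - z] of [xt] mod [p] lift
   uniquely mod [p ^ (k - l)], and each lift [s] accounts for the [p ^ (l / 2)]
   square roots [y * p ^ (l / 2)] with [y = s] mod [p ^ (k - l)]. Each of those
   has valuation [l / 2 < l] and unit part [= z] (resp. [p - z]) mod [p], which
   is the recursion defining [T_p]. *)

Section FunctionalGraphTree.

Variables (vs : seq nat) (f : nat -> nat) (r : nat).
Hypothesis f_closed : forall x, x \in vs -> f x \in vs.
Hypothesis reaches_root : forall x, x \in vs -> exists j, iter j f x = r.

Lemma ujoinsC e u v : ujoins f e u v = ujoins f e v u.
Proof. by rewrite /ujoins orbC. Qed.

Lemma uadjC u v : uadj vs f r u v = uadj vs f r v u.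
Proof. by apply: eq_has => e; rewrite ujoinsC. Qed.

Definition ulinked u v := exists s, path (uadj vs f r) u s /\ last u s = v.

Lemma ulinked_sym u v : ulinked u v -> ulinked v u.
Proof.
move=> [s [us <-]]; exists (rev (belast u s)); split.
  by rewrite rev_path; apply: sub_path us => a b; rewrite uadjC.
by case: s {us} => //= a s; rewrite rev_cons last_rcons.
Qed.

Lemma ulinked_trans u v w : ulinked u v -> ulinked v w -> ulinked u w.
Proof.
move=> [s [us <-]] [t [vt <-]]; exists (s ++ t).
by rewrite cat_path us vt last_cat.
Qed.

Lemma ulinked_root u : u \in vs -> ulinked u r.
Proof.
move=> /[dup] /reaches_root [j]; elim: j u => [|j IH] u; first by move=> <-; exists [::].
have [-> _ _|ur] := eqVneq u r; first by exists [::].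
rewrite iterSr => /IH fu_r uvs; have [s [fu_s <-]] := fu_r (f_closed uvs).
exists (f u :: s); rewrite /= fu_s andbT; split => //.
by apply/hasP; exists u; rewrite // ur /ujoins !eqxx.
Qed.

Lemma uconnected_of_reach : uconnected vs f r.
Proof.
move=> u v uvs vvs.
exact: ulinked_trans (ulinked_root uvs) (ulinked_sym (ulinked_root vvs)).
Qed.

(* Outside [vs] the predicate holds trivially, so that [depth] is total. *)
Lemma reach_root_ex x : exists j, (x \notin vs) || (iter j f x == r).
Proof.
case: (boolP (x \in vs)) => [/reaches_root [j xj]|]; last by exists 0.
by exists j; rewrite xj eqxx orbT.
Qed.

Definition depth x := ex_minn (reach_root_ex x).

Lemma depthS e : e \in vs -> e != r -> depth e = (depth (f e)).+1.
Proof.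
move=> evs er; have fevs := f_closed evs; rewrite /depth.
case: ex_minnP => a; rewrite evs /= => /eqP ea a_min.
case: ex_minnP => b; rewrite fevs /= => /eqP eb b_min.
case: a ea a_min => [/= e_r|a ea a_min]; first by rewrite e_r eqxx in er.
have := b_min a; rewrite -iterSr ea eqxx => /(_ isT).
have := a_min b.+1; rewrite iterSr eb eqxx => /(_ isT); lia.
Qed.

Lemma edge_tail_deeper e a b : e \in vs -> e != r -> ujoins f e a b ->
  a \in vs -> depth b <= depth a -> e = a.
Proof.
move=> evs er /orP [/andP [/eqP -> _] //|/andP [/eqP eb /eqP fe]] avs.
by subst b; rewrite depthS // fe; lia.
Qed.

Lemma no_ucycle : ~ has_ucycle vs f r.
Proof.
move=> [cv [ce [cv_gt0 size_ce [_ uniq_ce] /andP [cv_vs ce_vs] joins]]].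
set m := size cv in cv_gt0 size_ce joins.
have cvP i : i < m -> nth 0 cv i \in vs by move=> im; apply: (allP cv_vs); exact: mem_nth.
have ceP i : i < m -> (nth 0 ce i \in vs) && (nth 0 ce i != r).
  by move=> im; apply: (allP ce_vs); rewrite mem_nth ?size_ce.
pose j : 'I_m := [arg max_(i > Ordinal cv_gt0) depth (nth 0 cv i)].
have j_max i : i < m -> depth (nth 0 cv i) <= depth (nth 0 cv j).
  by move=> im; rewrite /j; case: arg_maxnP => // i0 _ i0_max; exact: (i0_max (Ordinal im)).
have tail i b : i < m -> b < m ->
    ujoins f (nth 0 ce i) (nth 0 cv j) (nth 0 cv b) -> nth 0 ce i = nth 0 cv j.
  move=> im bm jb; have /andP [evs er] := ceP i im.
  by apply: edge_tail_deeper (j_max _ bm) => //; apply: cvP.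
pose i := (j + m).-1 %% m.
have im : i < m by rewrite ltn_mod.
have ij : i.+1 %% m = j.
  rewrite /i -addn1 modnDml addn1 prednK; last lia.
  by rewrite modnDr modn_small.
have e_j := tail j _ (ltn_ord j) (ltn_pmod _ cv_gt0) (joins j (ltn_ord j)).
have e_i : nth 0 ce i = nth 0 cv j.
  by apply: (tail i i) => //; rewrite ujoinsC -{1}ij; exact: joins.
have i_j : i = j by apply/eqP; rewrite -(nth_uniq 0 _ _ uniq_ce) ?size_ce // e_i e_j.
have jj : j.+1 %% m = j by rewrite -{1}i_j.
move: (joins j (ltn_ord j)); rewrite jj e_j /ujoins orbb => /andP [_ /eqP fj].
have /andP [evs er] := ceP j (ltn_ord j); rewrite e_j in evs er.
by have := depthS evs er; rewrite fj; lia.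
Qed.

Lemma grounded_treeP :
  uniq vs -> r \in vs -> f r = r -> grounded_tree vs f r.
Proof.
by move=> *; split=> //; split; [exact: uconnected_of_reach|exact: no_ucycle].
Qed.

End FunctionalGraphTree.

Lemma count_iota_modn d r n :
  r < d -> count (fun z => z %% d == r) (iota 0 (d * n)) = n.
Proof.
move=> rd; elim: n => [|n IH]; first by rewrite muln0.
rewrite mulnS addnC iotaD count_cat IH add0n -{1}(addn0 (d * n)) iotaDl count_map.
rewrite (eq_in_count (a2 := pred1 r)); last first.
  by move=> z; rewrite mem_iota /= => zd; rewrite mulnC modnMDl modn_small.
by rewrite count_uniq_mem ?iota_uniq // mem_iota rd addn1.
Qed.

Lemma sqr_mul_pexp_modn p k z m : 0 < p -> m.*2 <= k ->
  (z * p ^ m) ^ 2 %% p ^ k = (z ^ 2 %% p ^ (k - m.*2)) * p ^ m.*2.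
Proof. by move=> p_gt0 mk; rewrite muln_modl -?expnD ?subnK ?expnMn -?expnM ?muln2. Qed.

Lemma dvdn_lt0 d n : d %| n -> n < d -> n = 0.
Proof. by move=> /dvdnP [[|q] ->] //; rewrite mulSn; lia. Qed.

Lemma dvdn_lt_double d n : d %| n -> 0 < n < d.*2 -> n = d.
Proof. by move=> /dvdnP [[|[|q]] ->] /=; rewrite ?mul1n //; lia. Qed.

Lemma sqr_subn_modn p z : z <= p -> (p - z) ^ 2 = z ^ 2 %[mod p].
Proof.
move=> zp; have E : (2 * z) * p + (p - z) ^ 2 = p * p + z ^ 2 by nia.
by rewrite -(modnMDl (2 * z)) E modnMDl.
Qed.

Section PrimePowers.

Variable p : nat.
Hypothesis p_pr : prime p.

Lemma coprime_gt0 w : coprime w p -> 0 < w.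
Proof. by case: w => //; rewrite /coprime gcd0n => /eqP p1; move: p_pr; rewrite p1. Qed.

Lemma coprime_lt w : 0 < w < p -> coprime w p.
Proof.
move=> /andP [w_gt0 wp]; rewrite coprime_sym prime_coprime //.
by apply/negP => /dvdn_lt0 /(_ wp) w0; rewrite w0 in w_gt0.
Qed.

Lemma coprime_modn_pexp w e : 0 < e -> coprime w p -> coprime (w %% p ^ e) p.
Proof.
move=> e_gt0; rewrite ![coprime _ p]coprime_sym !prime_coprime // /dvdn.
by rewrite modn_dvdm ?dvdn_exp.
Qed.

Lemma logn_mul_pexp w j : coprime w p -> logn p (w * p ^ j) = j.
Proof.
move=> wp; rewrite lognM ?(coprime_gt0 wp) ?expn_gt0 ?prime_gt0 //.
by rewrite pfactorK // logn_coprime // coprime_sym.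
Qed.

Lemma sqrt_modn_pexp k l xt c : l < k -> coprime xt p ->
  c ^ 2 %% p ^ k = xt * p ^ l ->
  exists2 z, coprime z p &
    [/\ ~~ odd l, c = z * p ^ l./2 & z ^ 2 %% p ^ (k - l) = xt].
Proof.
move=> lk xtp csq; have p_gt0 := prime_gt0 p_pr.
have x_gt0 : 0 < xt * p ^ l by rewrite muln_gt0 coprime_gt0 ?expn_gt0 ?p_gt0.
have c_gt0 : 0 < c by case: c csq => //; rewrite exp0n // mod0n => x0; rewrite -x0 in x_gt0.
have [z zp c_eq] := pfactor_coprime p_pr c_gt0; rewrite coprime_sym in zp.
set m := logn p c in c_eq.
have mk : m.*2 < k.
  rewrite ltnNge; apply/negP => km.
  have : p ^ k %| c ^ 2 by rewrite c_eq expnMn -expnM dvdn_mull // dvdn_exp2l // muln2.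
  by rewrite /dvdn csq => /eqP x0; rewrite x0 in x_gt0.
rewrite c_eq sqr_mul_pexp_modn // 1?ltnW // in csq.
have /(congr1 (logn p)) := csq; rewrite !logn_mul_pexp //; last first.
  by rewrite coprime_modn_pexp ?subn_gt0 // coprime_pexpl.
move=> ml; exists z => //; rewrite c_eq -ml doubleK odd_double; split=> //.
have pm_gt0 : 0 < p ^ m.*2 by rewrite expn_gt0 p_gt0.
by apply/eqP; rewrite -(eqn_pmul2r pm_gt0) csq ml.
Qed.

Lemma sqr_eq_modp z w : 0 < z < p -> w < p -> w ^ 2 = z ^ 2 %[mod p] ->
  w = z \/ w = p - z.
Proof.
move=> /andP [z_gt0 zp] wp.
wlog zw : w z z_gt0 zp wp / z <= w.
  move=> gen wz; have [/gen|wz_lt] := leqP z w; first exact.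
  have [w_gt0|] := ltnP 0 w; first by case: (gen z w) => //; lia.
  rewrite leqn0 => /eqP w0; move: wz; rewrite w0 exp0n // mod0n => /esym/eqP.
  rewrite -/(dvdn p _) Euclid_dvdX // andbT => /dvdn_lt0 z0.
  by have := z0 zp; lia.
move/eqP; rewrite eqn_mod_dvd ?leq_exp2r // subn_sqr Euclid_dvdM //.
case/orP => [/dvdn_lt0 | /dvdn_lt_double]; lia.
Qed.

Hypothesis p_odd : odd p.

(* As [p] is odd and prime to [z], it does not divide [z + w = 2 z (mod p)];
   hence [p ^ e] divides [z - w] in [z ^ 2 - w ^ 2 = (z - w) (z + w)]. *)
Lemma sqr_inj_modn_pexp e z w : coprime z p ->
  z = w %[mod p] -> z ^ 2 = w ^ 2 %[mod p ^ e] -> z = w %[mod p ^ e].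
Proof.
wlog wz : z w / w <= z.
  move=> gen zp zw zw2; have [wz|zw_lt] := leqP w z; first exact: gen.
  have wp : coprime w p by rewrite -coprime_modl -zw coprime_modl.
  by apply/esym; apply: gen; rewrite 1?ltnW.
move=> zp zw /eqP; rewrite eqn_mod_dvd ?leq_exp2r // subn_sqr => dvd_e.
apply/eqP; rewrite eqn_mod_dvd //; move: dvd_e; rewrite Gauss_dvdl //.
apply: coprimeXl; rewrite prime_coprime //; apply/negP => p_zw.
have : p %| z * 2.
  by move: p_zw; rewrite /dvdn -modnDm -zw modnDm addnn -mul2n mulnC.
rewrite Euclid_dvdM // => /orP [p_z|p_2].
  by move: zp; rewrite coprime_sym prime_coprime // p_z.
have := dvdn_leq (isT : 0 < 2) p_2; have := prime_gt1 p_pr.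
by case: p p_pr p_odd {zp zw p_zw p_2} => [|[|[|]]].
Qed.

(* Hensel lifting, by counting: squaring is injective on the [p ^ (e - 1)]
   residues mod [p ^ e] above [z], and lands in the [p ^ (e - 1)] residues
   above [z ^ 2]. *)
Lemma sqrt_lift_modn_pexp e z a : 0 < e -> coprime z p -> z < p ->
  a < p ^ e -> a = z ^ 2 %[mod p] ->
  exists2 s, s < p ^ e & s %% p = z /\ s ^ 2 %% p ^ e = a.
Proof.
move=> e_gt0 zp z_lt a_lt az.
have pe : p ^ e = p * p ^ (e - 1) by rewrite -expnS; congr (_ ^ _); lia.
have p_pe : p %| p ^ e by rewrite dvdn_exp.
pose U := [seq y <- iota 0 (p ^ e) | y %% p == z].
pose V := [seq y <- iota 0 (p ^ e) | y %% p == z ^ 2 %% p].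
pose sq y := y ^ 2 %% p ^ e.
have uniq_sqU : uniq (map sq U).
  rewrite map_inj_in_uniq ?filter_uniq ?iota_uniq // => y1 y2.
  rewrite !mem_filter !mem_iota /= => /andP [/eqP y1z y1_lt] /andP [/eqP y2z y2_lt] sq12.
  have y1p : coprime y1 p by rewrite -coprime_modl y1z.
  have := sqr_inj_modn_pexp y1p (etrans y1z (esym y2z)) sq12.
  by rewrite !modn_small //; lia.
have sqU_V : {subset map sq U <= V}.
  move=> _ /mapP [y + ->]; rewrite mem_filter => /andP [/eqP yz _].
  rewrite mem_filter mem_iota /= ltn_mod expn_gt0 prime_gt0 //= andbT.
  by rewrite /sq modn_dvdm // -modnXm yz.
have size_V : size V <= size (map sq U).
  by rewrite size_map !size_filter pe !count_iota_modn ?ltn_mod ?prime_gt0.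
have [_ sqU_eq] := uniq_min_size uniq_sqU sqU_V size_V.
have : a \in V by rewrite mem_filter mem_iota /= -az eqxx a_lt.
rewrite -sqU_eq => /mapP [s + ->]; rewrite mem_filter mem_iota.
by case/andP => /eqP sz /andP [_ s_lt]; exists s.
Qed.

End PrimePowers.

Section Realizes.

Variables (n : nat) (f : nat -> nat).

(* Must coincide with the local fixpoint in the body of [realizes] (including
   [{struct ts}]) for [realizesE] to hold by conversion. *)
Fixpoint realizes_seq (cs : seq nat) (ts : seq rtree) {struct ts} : Prop :=
  match cs, ts with
  | [::], [::] => True
  | c :: cs', t :: ts' => realizes n f c t /\ realizes_seq cs' ts'
  | _, _ => False
  end.

Lemma realizesE y ts : realizes n f y (RNode ts) =
  exists cs, [/\ uniq cs, (forall c, (c \in cs) = (c < n) && (f c == y)) &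
                 realizes_seq cs ts].
Proof. reflexivity. Qed.

Lemma realizes_seq_cat cs1 cs2 ts1 ts2 :
  realizes_seq cs1 ts1 -> realizes_seq cs2 ts2 ->
  realizes_seq (cs1 ++ cs2) (ts1 ++ ts2).
Proof.
elim: cs1 ts1 => [|c cs1 IH] [|t ts1] //= [ct cts1] cts2.
by split; last exact: IH.
Qed.

Lemma realizes_seq_exists (P : rtree -> Prop) cs :
  (forall c, c \in cs -> exists2 t, P t & realizes n f c t) ->
  exists ts, [/\ size ts = size cs, forall t, List.In t ts -> P t &
                 realizes_seq cs ts].
Proof.
elim: cs => [|c cs IH] cP; first by exists [::].
have [t Pt ct] := cP c (mem_head _ _).
have [|ts [size_ts tsP cts]] := IH.
  by move=> c' c'cs; apply: cP; rewrite inE c'cs orbT.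
by exists (t :: ts); split => //= [|t' [<-|/tsP]]; rewrite ?size_ts.
Qed.

Lemma realizes_leaf y : (forall c, c < n -> f c != y) -> realizes n f y (RNode [::]).
Proof.
move=> no_pre; rewrite realizesE; exists [::]; split => // c.
by apply/esym/negbTE; rewrite negb_and -ltnNge; case: ltnP => //= /no_pre.
Qed.

End Realizes.

Lemma sqmod_neq_nonsquare p k l xt c : prime p -> l < k -> coprime xt p ->
  odd l \/ ~ (exists z, z ^ 2 = xt %% p %[mod p]) ->
  sqmod (p ^ k) c != xt * p ^ l.
Proof.
move=> p_pr lk xtp l_nonsq; apply/eqP.
move=> /(sqrt_modn_pexp p_pr lk xtp) [z zp [l_even _ zsq]].
case: l_nonsq => [|[]]; first exact/negP.
exists z; have p_pe : p %| p ^ (k - l) by rewrite dvdn_exp // subn_gt0.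
by rewrite modn_mod -zsq modn_dvdm.
Qed.

Section SqrtClasses.

Variables p k l xt : nat.
Hypotheses (p_pr : prime p) (l_even : ~~ odd l) (lk : l < k).
Hypothesis xtp : coprime xt p.

Local Notation m := l./2.
Local Notation e := (k - l).

Lemma double_half_even : m.*2 = l.
Proof. by rewrite -[RHS]odd_double_half (negbTE l_even). Qed.

Lemma pexp_sub_half : p ^ (k - m) = p ^ e * p ^ m.
Proof. by rewrite -expnD; congr (_ ^ _); move: double_half_even lk; clear; lia. Qed.

Lemma pexp_split_half : p ^ k = p ^ (k - m) * p ^ m.
Proof. by rewrite -expnD subnK //; move: lk; clear; lia. Qed.

(* The square roots of [xt * p ^ l] mod [p ^ k] whose unit part is [s] mod [p ^ e]. *)
Definition sqrt_class s :=
  [seq y * p ^ m | y <- iota 0 (p ^ (k - m)) & y %% p ^ e == s].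

Lemma size_sqrt_class s : s < p ^ e -> size (sqrt_class s) = p ^ m.
Proof. by move=> s_lt; rewrite size_map size_filter pexp_sub_half count_iota_modn. Qed.

Lemma uniq_sqrt_class s : uniq (sqrt_class s).
Proof.
rewrite map_inj_uniq ?filter_uniq ?iota_uniq // => y1 y2 /eqP.
by rewrite eqn_pmul2r ?expn_gt0 ?prime_gt0 // => /eqP.
Qed.

Lemma sqrt_classP s c : c \in sqrt_class s ->
  exists2 y, c = y * p ^ m & (y < p ^ (k - m)) && (y %% p ^ e == s).
Proof. by case/mapP => y; rewrite mem_filter mem_iota andbC => ys ->; exists y. Qed.

Lemma mem_sqrt_class s y :
  (y * p ^ m \in sqrt_class s) = (y < p ^ (k - m)) && (y %% p ^ e == s).
Proof.
rewrite (mem_map (f := fun y => y * p ^ m)) ?mem_filter ?mem_iota 1?andbC //.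
by move=> y1 y2 /eqP; rewrite eqn_pmul2r ?expn_gt0 ?prime_gt0 // => /eqP.
Qed.

Lemma sqmod_sqrt_class s c : s ^ 2 %% p ^ e = xt -> c \in sqrt_class s ->
  c < p ^ k /\ sqmod (p ^ k) c = xt * p ^ l.
Proof.
move=> s_sq /sqrt_classP [y -> /andP [y_lt /eqP ys]]; split.
  by rewrite pexp_split_half ltn_pmul2r ?expn_gt0 ?prime_gt0.
rewrite /sqmod sqr_mul_pexp_modn ?prime_gt0 ?double_half_even 1?ltnW //.
by rewrite -modnXm ys s_sq.
Qed.

Lemma uniq_sqrt_class_cat s1 s2 : s1 != s2 -> uniq (sqrt_class s1 ++ sqrt_class s2).
Proof.
move=> s12; rewrite cat_uniq !uniq_sqrt_class /= andbT; apply/hasPn => c.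
move=> /sqrt_classP [y2 -> /andP [_ /eqP y2s]]; rewrite mem_sqrt_class.
by apply/negP => /andP [_ /eqP y2s1]; move: s12; rewrite -y2s y2s1 eqxx.
Qed.

Hypothesis p_odd : odd p.

Lemma sqrt_class_cat_preimage z s1 s2 : 0 < z < p ->
  s1 < p ^ e -> s1 %% p = z -> s1 ^ 2 %% p ^ e = xt ->
  s2 < p ^ e -> s2 %% p = p - z -> s2 ^ 2 %% p ^ e = xt ->
  forall c, (c \in sqrt_class s1 ++ sqrt_class s2) =
            (c < p ^ k) && (sqmod (p ^ k) c == xt * p ^ l).
Proof.
move=> zp s1_lt s1z s1_sq s2_lt s2z s2_sq c; apply/idP/andP.
  by rewrite mem_cat => /orP [] /sqmod_sqrt_class [] // -> ->.
case=> c_lt /eqP c_sq; have p_gt0 := prime_gt0 p_pr.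
have [y yp [_ c_eq y_sq]] := sqrt_modn_pexp p_pr lk xtp c_sq.
have y_lt : y < p ^ (k - m).
  by rewrite -(@ltn_pmul2r (p ^ m)) ?expn_gt0 ?p_gt0 // -c_eq -pexp_split_half.
have p_pe : p %| p ^ e by rewrite dvdn_exp // subn_gt0.
have mem_s s : s < p ^ e -> s ^ 2 %% p ^ e = xt -> s %% p = y %% p ->
    c \in sqrt_class s.
  move=> s_lt s_sq sy; rewrite c_eq mem_sqrt_class y_lt /=.
  have := sqr_inj_modn_pexp p_pr p_odd yp (esym sy) (etrans y_sq (esym s_sq)).
  by rewrite (modn_small s_lt) => ->.
have y_sqp : (y %% p) ^ 2 = z ^ 2 %[mod p].
  by rewrite -s1z !modnXm -(modn_dvdm _ p_pe) y_sq -s1_sq modn_dvdm.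
rewrite mem_cat; case: (sqr_eq_modp p_pr zp (ltn_pmod y p_gt0) y_sqp) => yz.
  by rewrite mem_s // s1z.
by rewrite orbC mem_s // s2z.
Qed.

End SqrtClasses.

Definition in_tree_Tp_at p k l := forall x xt, coprime xt p ->
  x = xt * p ^ l -> x < p ^ k ->
  exists t, is_Tp p (xt %% p) l t /\ realizes (p ^ k) (sqmod (p ^ k)) x t.

Lemma in_tree_Tp_children p k l xt s w : prime p -> ~~ odd l -> l < k ->
  in_tree_Tp_at p k l./2 ->
  0 < w < p -> s %% p = w -> s ^ 2 %% p ^ (k - l) = xt ->
  forall c, c \in sqrt_class p k l s ->
  exists2 t, is_Tp p w l./2 t & realizes (p ^ k) (sqmod (p ^ k)) c t.
Proof.
move=> p_pr l_even lk IH wp sw s_sq c c_cls.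
have [c_lt _] := sqmod_sqrt_class p_pr l_even lk s_sq c_cls.
have [y c_eq /andP [_ /eqP ys]] := sqrt_classP c_cls.
have yw : y %% p = w by rewrite -sw -ys modn_dvdm // dvdn_exp // subn_gt0.
have yp : coprime y p by rewrite -coprime_modl yw coprime_lt.
by have [t [t_Tp ct]] := IH c y yp c_eq c_lt; exists t; rewrite // -yw.
Qed.

Lemma in_tree_Tp_square p k l x xt z : prime p -> odd p ->
  ~~ odd l -> 0 < l < k -> coprime xt p -> x = xt * p ^ l -> x < p ^ k ->
  0 < z < p -> xt = z ^ 2 %[mod p] -> in_tree_Tp_at p k l./2 ->
  exists t, is_Tp p (xt %% p) l t /\ realizes (p ^ k) (sqmod (p ^ k)) x t.
Proof.
move=> p_pr p_odd l_even /andP [l_gt0 lk] xtp -> x_lt zp xt_z IH.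
have p_gt0 := prime_gt0 p_pr.
have e_gt0 : 0 < k - l by rewrite subn_gt0.
have xt_lt : xt < p ^ (k - l).
  by rewrite -(@ltn_pmul2r (p ^ l)) ?expn_gt0 ?p_gt0 // -expnD subnK // ltnW.
have zpz : 0 < p - z < p by case/andP: zp => ? ?; apply/andP; split; lia.
have z_neq : z != p - z.
  apply/eqP => zz; have p2z : p = z.*2 by move: zz zp; clear; lia.
  by move: p_odd; rewrite p2z odd_double.
have xt_pz : xt = (p - z) ^ 2 %[mod p] by rewrite sqr_subn_modn // ltnW //; case/andP: zp.
have [s1 s1_lt [s1z s1_sq]] :=
  sqrt_lift_modn_pexp p_pr p_odd e_gt0 (coprime_lt p_pr zp) (proj2 (andP zp)) xt_lt xt_z.
have [s2 s2_lt [s2z s2_sq]] :=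
  sqrt_lift_modn_pexp p_pr p_odd e_gt0 (coprime_lt p_pr zpz) (proj2 (andP zpz)) xt_lt xt_pz.
have children := in_tree_Tp_children p_pr l_even lk IH.
have [ts1 [size_ts1 ts1_Tp cts1]] := realizes_seq_exists (children xt _ _ zp s1z s1_sq).
have [ts2 [size_ts2 ts2_Tp cts2]] := realizes_seq_exists (children xt _ _ zpz s2z s2_sq).
exists (RNode (ts1 ++ ts2)); split.
  apply: (Tp_sq (z1 := z) (z2 := p - z)); rewrite ?modn_mod -?xt_z -?xt_pz //.
    by rewrite size_ts1 (size_sqrt_class (p := p) l_even lk s1_lt).
  by rewrite size_ts2 (size_sqrt_class (p := p) l_even lk s2_lt).
rewrite realizesE; exists (sqrt_class p k l s1 ++ sqrt_class p k l s2); split.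
- apply: (uniq_sqrt_class_cat _ _ p_pr); move: z_neq; apply: contra_neq => s12.
  by rewrite -{1}s1z s12 s2z.
- exact: sqrt_class_cat_preimage zp s1_lt s1z s1_sq s2_lt s2z s2_sq.
- exact: realizes_seq_cat.
Qed.

Lemma in_tree_Tp p k l : prime p -> odd p -> 0 < l < k -> in_tree_Tp_at p k l.
Proof.
move=> p_pr p_odd; elim/ltn_ind: l => l IH /andP [l_gt0 lk] x xt xtp x_eq x_lt.
have p_gt0 := prime_gt0 p_pr.
have leaf : odd l \/ ~ (exists z, z ^ 2 = xt %% p %[mod p]) ->
    exists t, is_Tp p (xt %% p) l t /\ realizes (p ^ k) (sqmod (p ^ k)) x t.
  move=> l_nonsq; exists (RNode [::]); split; last first.
    by apply: realizes_leaf => c _; rewrite x_eq; exact: sqmod_neq_nonsquare.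
  have [l_odd|l_even] := boolP (odd l); first exact: Tp_odd.
  by case: l_nonsq => [l_odd|]; [rewrite l_odd in l_even | exact: Tp_nonsq].
have [l_odd|l_even] := boolP (odd l); first by apply: leaf; left.
case: (boolP (has (fun z => z ^ 2 %% p == xt %% p) (iota 0 p))); last first.
  move=> /hasPn nonsq; apply: leaf; right => -[z z_sq].
  have z_lt : z %% p \in iota 0 p by rewrite mem_iota add0n ltn_pmod.
  by move: (nonsq _ z_lt); rewrite modnXm z_sq modn_mod eqxx.
move=> /hasP [z _ /eqP z_sq].
have z_gt0 : 0 < z %% p.
  rewrite lt0n; apply: contraTneq xtp => p_z.
  by rewrite coprime_sym prime_coprime // negbK /dvdn -z_sq -modnXm p_z exp0n // mod0n.
apply: (in_tree_Tp_square (z := z %% p)) => //; rewrite ?l_gt0 ?ltn_pmod ?z_gt0 //.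
  by rewrite modnXm z_sq.
by apply: IH; move: l_gt0 lk l_even; clear; lia.
Qed.

Lemma iter_sqmod n j x : iter j.+1 (sqmod n) x = x ^ (2 ^ j.+1) %% n.
Proof.
elim: j => [|j IH] //.
by rewrite iterS IH /sqmod modnXm -expnM (expnS 2 j.+1) mulnC.
Qed.

Section Nilpotent.

Variables p k : nat.
Hypotheses (p_pr : prime p) (k_gt0 : 0 < k).

Lemma mem_Nverts x : (x \in Nverts p k) = (x < p ^ k) && (p %| x).
Proof. by rewrite mem_filter mem_iota andbC. Qed.

Lemma size_Nverts : size (Nverts p k) = p ^ (k - 1).
Proof.
have pk : p ^ k = p * p ^ (k - 1) by rewrite -expnS subn1 prednK.
rewrite size_filter pk -[RHS](count_iota_modn _ (prime_gt0 p_pr)).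
by apply: eq_count.
Qed.

Lemma sqmod_Nverts x : x \in Nverts p k -> sqmod (p ^ k) x \in Nverts p k.
Proof.
rewrite !mem_Nverts => /andP [_ p_x]; rewrite /sqmod ltn_pmod ?expn_gt0 ?prime_gt0 //=.
by rewrite /dvdn modn_dvdm ?dvdn_exp // -/(dvdn p _) dvdn_exp.
Qed.

Lemma Nverts_reach0 x : x \in Nverts p k -> iter k (sqmod (p ^ k)) x = 0.
Proof.
rewrite mem_Nverts => /andP [_ /dvdnP [q ->]]; rewrite -(prednK k_gt0) iter_sqmod.
rewrite prednK //; apply/eqP; rewrite -/(dvdn _ _) expnMn dvdn_mull // dvdn_exp2l //.
by rewrite ltnW // ltn_expl.
Qed.

Lemma grounded_tree_Nverts : grounded_tree (Nverts p k) (sqmod (p ^ k)) 0.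
Proof.
apply: grounded_treeP.
- exact: sqmod_Nverts.
- by move=> x /Nverts_reach0; exists k.
- by rewrite filter_uniq ?iota_uniq.
- by rewrite mem_Nverts expn_gt0 prime_gt0 ?dvdn0.
- by rewrite /sqmod exp0n ?mod0n.
Qed.

Lemma pexp_dvdn_sqr y l : coprime y p -> (p ^ k %| (y * p ^ l) ^ 2) = (k <= l.*2).
Proof.
move=> yp; have y_gt0 := coprime_gt0 p_pr yp; have p_gt0 := prime_gt0 p_pr.
rewrite pfactor_dvdn // ?expn_gt0 ?muln_gt0 ?y_gt0 ?expn_gt0 ?p_gt0 //.
by rewrite lognX (logn_mul_pexp p_pr _ yp) mul2n.
Qed.

Lemma Nverts_sqmod_eq0 x :
  (x \in Nverts p k) && (x != 0) && (sqmod (p ^ k) x == 0) <->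
  exists l y, [/\ (k.+1)./2 <= l < k, 1 <= y <= p ^ (k - l), coprime y p &
                  x = y * p ^ l].
Proof.
have p_gt0 := prime_gt0 p_pr.
have pk_split l : l < k -> p ^ k = p ^ (k - l) * p ^ l.
  by move=> lk; rewrite -expnD subnK // ltnW.
split.
  case/andP => /andP [+ x_neq0] /eqP x_sq; rewrite mem_Nverts => /andP [x_lt _].
  have [y yp x_eq] := pfactor_coprime p_pr (etrans (lt0n x) x_neq0).
  rewrite coprime_sym in yp.
  have y_gt0 := coprime_gt0 p_pr yp.
  set l := logn p x in x_eq.
  have lk : l < k.
    rewrite -(ltn_exp2l _ _ (prime_gt1 p_pr)); apply: leq_ltn_trans x_lt.
    by rewrite x_eq leq_pmull.
  exists l, y; split => //.
    have : p ^ k %| x ^ 2 by rewrite /dvdn -/(sqmod _ x) x_sq.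
    by rewrite x_eq pexp_dvdn_sqr // lk andbT; lia.
  by rewrite y_gt0 ltnW // -(@ltn_pmul2r (p ^ l)) ?expn_gt0 ?p_gt0 // -x_eq -pk_split.
case=> l [y [/andP [kl lk] /andP [y_gt0 y_le] yp ->]].
have y_lt : y < p ^ (k - l).
  rewrite ltn_neqAle y_le andbT; apply: contraTneq yp => ->.
  by rewrite coprime_pexpl ?subn_gt0 // prime_coprime // dvdnn.
rewrite mem_Nverts {1}(pk_split l) // ltn_pmul2r ?expn_gt0 ?p_gt0 // y_lt.
rewrite dvdn_mull ?dvdn_exp //=; last lia.
rewrite muln_eq0 negb_or -!lt0n y_gt0 expn_gt0 p_gt0 /=.
by rewrite -/(dvdn _ _) pexp_dvdn_sqr //; lia.
Qed.

End Nilpotent.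

Theorem theorem9 (p k : nat) :
  prime p -> odd p -> 1 <= k ->
  [/\ grounded_tree (Nverts p k) (sqmod (p ^ k)) 0,
      size (Nverts p k) = p ^ (k - 1),
      (forall x : nat,
         (x \in Nverts p k) && (x != 0) && (sqmod (p ^ k) x == 0) <->
         exists l y : nat,
           [/\ (k.+1)./2 <= l < k, 1 <= y <= p ^ (k - l), coprime y p &
               x = y * p ^ l]) &
      (forall x xt l : nat,
         x \in Nverts p k -> x != 0 ->
         1 <= l < k -> coprime xt p -> x = xt * p ^ l ->
         exists t : rtree,
           is_Tp p (xt %% p) l t /\ realizes (p ^ k) (sqmod (p ^ k)) x t)].
Proof.
move=> p_pr p_odd k_gt0; split.
- exact: grounded_tree_Nverts.
- exact: size_Nverts.
- exact: Nverts_sqmod_eq0.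
- move=> x xt l; rewrite mem_Nverts => /andP [x_lt _] _ l_range xtp x_eq.
  exact: (in_tree_Tp p_pr p_odd l_range) x xt xtp x_eq x_lt.
Qed.
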